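(* Let $g=(U,v)\in\mathrm{Aff}(n,\mathbb{C})$ where $U\in\mathrm{GL}(n,\mathbb{C})$ is unipotent (all eigenvalues equal to $1$) and $v\in\mathbb{C}^n$ is arbitrary. Then $g$ is strongly $c$-reversible; in particular $g$ is a product of two coninvolutions in $\mathrm{Aff}(n,\mathbb{C})$.
   Context: $\mathrm{Aff}(n,\mathbb{C})$ is the group of affine maps $z\mapsto Az+v$, written $(A,v)$, with product $(A,v)(B,w)=(AB,Aw+v)$ and identity $e=(I_n,0)$. For $g=(A,v)$ set $\overline{g}=(\overline{A},\overline{v})$. An element $h$ is a coninvolution if $h\overline{h}=e$; $g$ is strongly $c$-reversible if there is a coninvolution $h$ with $hgh^{-1}=\overline{g}^{-1}$. *)

(* The complex numbers are modelled as R[i] = complex R for an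
   arbitrary R : realType (any such R is the real field, so R[i] is C). *)
From HB Require Import structures.
From mathcomp Require Import all_boot all_order all_algebra.
From mathcomp Require Import complex.
From mathcomp Require Import reals.
Set Implicit Arguments. Unset Strict Implicit. Unset Printing Implicit Defensive.
Import Order.TTheory GRing.Theory Num.Theory.
Local Open Scope ring_scope.

Section Affine.
Variables (R : realType) (n : nat).
Local Notation C := R[i].

(* An element (A, v) of Aff(n,C) acts as z |-> A z + v. *)
Definition aff := ('M[C]_n * 'cV[C]_n)%type.

Definition in_Aff (g : aff) : Prop := g.1 \in unitmx.

Definition aff_mul (g h : aff) : aff := (g.1 *m h.1, g.1 *m h.2 + g.2).
Definition aff_one : aff := (1%:M, 0).
Definition aff_inv (g : aff) : aff := (invmx g.1, - (invmx g.1 *m g.2)).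
Definition aff_bar (g : aff) : aff := (map_mx (@conjc R) g.1, map_mx (@conjc R) g.2).

Definition coninvolution (h : aff) : Prop :=
  in_Aff h /\ aff_mul h (aff_bar h) = aff_one.

Definition strongly_c_reversible (g : aff) : Prop :=
  exists h : aff, coninvolution h /\
    aff_mul (aff_mul h g) (aff_inv h) = aff_inv (aff_bar g).

Definition unipotent (U : 'M[C]_n) : Prop :=
  forall a : C, eigenvalue U a -> a = 1.
End Affine.

From HB Require Import structures.
From mathcomp Require Import all_boot all_order all_algebra.
From mathcomp Require Import complex.
From mathcomp Require Import reals.
From mathcomp Require Import zify.
Import Order.TTheory GRing.Theory Num.Theory.
Local Open Scope ring_scope.
Set Implicit Arguments. Unset Strict Implicit. Unset Printing Implicit Defensive.

(* Embed Aff(n,C) in GL(n+1,C) by g |-> [[1, 0], [v, A]]; these are the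
   matrices fixing the row (1, 0). The image G of g is unipotent, so its Cayley
   transform X = (G - 1)(G + 1)^-1 is nilpotent, G = (1 + X)(1 - X)^-1, and
   replacing X by -X inverts G. A nilpotent matrix is similar, simultaneously
   with a vector of its left kernel, to a matrix with entries 0 and 1; applied
   to iX this yields H = conj(T)^-1 T with H conj(H) = 1 and
   H X H^-1 = - conj(X), hence H G H^-1 = conj(G)^-1, and H still fixes the row
   (1, 0), so it comes from an affine h. Finally g = conj(h) (h g) is a product
   of two coninvolutions. *)

Local Notation mx_conj := (map_mx conjc).

Section Nilpotent.
Variable F : fieldType.

Lemma unitmx_ker m (A : 'M[F]_m) :
  (forall v : 'rV_m, v *m A = 0 -> v = 0) -> A \in unitmx.
Proof. by move=> A_inj; rewrite -row_free_unit; apply: inj_row_free. Qed.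

Lemma nilpotent_scalar_add_unit m (N : 'M[F]_m) p c :
  N ^+ p = 0 -> c != 0 -> c%:M + N \in unitmx.
Proof.
move=> Np c_neq0; apply: unitmx_ker => v.
rewrite mulmxDr mul_mx_scalar addrC => /eqP; rewrite addr_eq0 -scaleNr => /eqP vN.
have vNj j : v *m N ^+ j = (- c) ^+ j *: v.
  elim: j => [|j IHj]; first by rewrite expr0 mulmx1 scale1r.
  by rewrite exprSr -mulmxE mulmxA IHj -scalemxAl vN scalerA -exprSr.
move/eqP: (vNj p); rewrite Np mulmx0 eq_sym scaler_eq0 expf_eq0 oppr_eq0.
by rewrite (negbTE c_neq0) andbF => /eqP.
Qed.

Lemma nilpotent_add1_unit m (N : 'M[F]_m) p : N ^+ p = 0 -> 1%:M + N \in unitmx.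
Proof. by move/nilpotent_scalar_add_unit; apply; rewrite oner_neq0. Qed.

Lemma nilpotent_sub1_unit m (N : 'M[F]_m) p : N ^+ p = 0 -> 1%:M - N \in unitmx.
Proof. by move=> Np; apply: (@nilpotent_add1_unit _ _ p); rewrite exprNn Np mulr0. Qed.

Lemma nilpotent_scale m (N : 'M[F]_m) p a : N ^+ p = 0 -> (a *: N) ^+ p = 0.
Proof.
suff aNj j : (a *: N) ^+ j = a ^+ j *: N ^+ j by rewrite aNj => ->; rewrite scaler0.
elim: j => [|j IHj]; first by rewrite !expr0 scale1r.
by rewrite !exprSr IHj -!mulmxE -scalemxAl -scalemxAr scalerA.
Qed.

Lemma nilpotent_index m (N : 'M[F]_m) p :
  (0 < m)%N -> N ^+ p = 0 -> exists k, N ^+ k.+1 = 0 /\ N ^+ k != 0.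
Proof.
move=> m_gt0; elim: p => [|p IHp] Np.
  move/matrixP: Np => /(_ (Ordinal m_gt0) (Ordinal m_gt0)).
  by rewrite expr0 !mxE eqxx /= => /eqP; rewrite oner_eq0.
by have [/IHp|Np_neq0] := eqVneq (N ^+ p) 0; last exists p.
Qed.

Lemma mx_neq0_dual_pair m n (A : 'M[F]_(m, n)) :
  A != 0 -> exists (x : 'rV_m) (c : 'cV_n), (x *m A *m c) 0 0 = 1.
Proof.
move=> A_neq0; have /existsP[i /existsP[j Aij]] : [exists i, exists j, A i j != 0].
  apply: contraNT A_neq0 => /existsPn A0; apply/eqP/matrixP => i j.
  by move/existsPn: (A0 i) => /(_ j)/negPn/eqP->; rewrite mxE.
exists (delta_mx 0 i), ((A i j)^-1 *: delta_mx j 0).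
by rewrite -rowE -scalemxAr -colE !mxE mulVf.
Qed.

End Nilpotent.

Definition krylov_rows (F : fieldType) m k (Z : 'M[F]_m) (x : 'rV_m) : 'M_(k, m) :=
  \matrix_(a < k) (x *m Z ^+ a).

Definition krylov_cols (F : fieldType) m k (Z : 'M[F]_m) (c : 'cV_m) : 'M_(m, k) :=
  \matrix_(r < m, b < k) (Z ^+ b *m c) r 0.

Definition shift_mx (F : fieldType) k : 'M[F]_k := \matrix_(a, b) (b == a.+1 :> nat)%:R.

(* If [Z ^+ k.+1 = 0] and [x Z^k c = 1], the rows [x Z^a] span a Z-stable
   complement of the Z-stable space [kermx K]: this splits off one Jordan block. *)
Section Krylov.
Variables (F : fieldType) (m k : nat) (Z : 'M[F]_m) (x : 'rV[F]_m) (c : 'cV[F]_m).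
Hypotheses (Zk : Z ^+ k.+1 = 0) (xZc : (x *m Z ^+ k *m c) 0 0 = 1).
Local Notation X := (krylov_rows k.+1 Z x).
Local Notation K := (krylov_cols k.+1 Z c).

Lemma expZ_eq0 j : (k.+1 <= j)%N -> Z ^+ j = 0.
Proof. by move=> le_kj; rewrite -(subnKC le_kj) exprD Zk mul0r. Qed.

Lemma mul_krylov_cols p (V : 'M_(p, m)) r (b : 'I_k.+1) :
  (V *m K) r b = (V *m (Z ^+ b *m c)) r 0.
Proof. by rewrite !mxE; apply: eq_bigr => l _; rewrite !mxE. Qed.

Lemma krylov_mxE (a b : 'I_k.+1) : (X *m K) a b = (x *m Z ^+ (a + b) *m c) 0 0.
Proof.
rewrite mul_krylov_cols.
transitivity ((row a X *m (Z ^+ b *m c)) 0 0); first by rewrite -row_mul [RHS]mxE.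
by rewrite rowK exprD -mulmxE !mulmxA.
Qed.

(* [X *m K] is a Hankel matrix, zero below its antidiagonal and one on it. *)
Lemma krylov_mx_unit : X *m K \in unitmx.
Proof.
apply: unitmx_ker => d dXK.
suff d0 t (a : 'I_k.+1) : (a < t)%N -> d 0 a = 0.
  by apply/rowP => a; rewrite mxE (d0 k.+1).
elim: t a => [//|t IHt] a; rewrite ltnS leq_eqVlt => /orP[/eqP def_a|/IHt//].
have lt_ka : (k - a < k.+1)%N by lia.
have := congr1 (fun u : 'rV_k.+1 => u 0 (Ordinal lt_ka)) dXK.
rewrite [in X in X -> _]mxE (bigD1 a) //= big1 => [|a2 a2_neq_a].
  rewrite addr0 krylov_mxE subnKC; last by rewrite -ltnS.
  by rewrite xZc mulr1 => ->; rewrite mxE.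
rewrite krylov_mxE; have [lt_a2a|lt_aa2|eq_a2a] := ltngtP a2 a.
- by rewrite IHt ?mul0r // -def_a.
- have le_ka2 : (k.+1 <= a2 + (k - a))%N by have := ltn_ord a; lia.
  by rewrite expZ_eq0 // mulmx0 mul0mx mxE mulr0.
- by rewrite (val_inj eq_a2a) eqxx in a2_neq_a.
Qed.

Lemma krylov_rows_shift : X *m Z = shift_mx F k.+1 *m X.
Proof.
apply/row_matrixP => a; rewrite !row_mul rowK -mulmxA mulmxE -exprSr.
rewrite [RHS]mulmx_sum_row; have [lt_ak|le_ka] := ltnP a.+1 k.+1.
  rewrite (bigD1 (Ordinal lt_ak)) //= big1 => [|b b_neq]; last first.
    rewrite !mxE; case: eqP => [def_b|_]; last by rewrite scale0r.
    by case/eqP: b_neq; apply: val_inj.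
  by rewrite addr0 !mxE eqxx scale1r rowK.
rewrite big1 => [|b _]; first by rewrite expZ_eq0 ?mulmx0.
by rewrite !mxE; case: eqP => [def_b|_]; [have := ltn_ord b; lia | rewrite scale0r].
Qed.

Lemma krylov_kermx_stable : (kermx K *m Z <= kermx K)%MS.
Proof.
rewrite sub_kermx; apply/eqP/matrixP => r b; rewrite mul_krylov_cols [RHS]mxE.
rewrite -mulmxA [Z *m _]mulmxA mulmxE -exprS.
have [lt_bk|le_kb] := ltnP b.+1 k.+1.
  by move/matrixP: (mulmx_ker K) => /(_ r (Ordinal lt_bk)); rewrite mul_krylov_cols !mxE.
by rewrite expZ_eq0 // mul0mx mulmx0 mxE.
Qed.

Lemma krylov_order : (k.+1 <= m)%N.
Proof.
have := mxrankM_maxl X K; rewrite mxrank_unit ?krylov_mx_unit // => le_km.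
exact: leq_trans le_km (rank_leq_col _).
Qed.

Lemma rank_krylov_cols : \rank K = k.+1.
Proof.
apply/eqP; rewrite eqn_leq rank_leq_col /=.
by rewrite -{1}(mxrank_unit krylov_mx_unit); apply: mxrankM_maxr.
Qed.

Lemma krylov_rows_kermx_full : (1%:M <= X + kermx K)%MS.
Proof.
set P := K *m invmx (X *m K) *m X.
rewrite -(subrK P 1%:M) addrC; apply: addmx_sub_adds; first exact: submxMl.
rewrite sub_kermx mulmxBl mul1mx -!mulmxA mulVmx ?krylov_mx_unit //.
by rewrite mulmx1 subrr.
Qed.

Lemma krylov_ker_decomp g :
  g *m Z = 0 -> (g - (g *m c) 0 0 *: (x *m Z ^+ k) <= kermx K)%MS.
Proof.
move=> gZ; rewrite sub_kermx; apply/eqP/rowP => b.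
rewrite mul_krylov_cols [RHS]mxE.
suff -> : (g - (g *m c) 0 0 *: (x *m Z ^+ k)) *m (Z ^+ b *m c) = 0 by rewrite mxE.
rewrite mulmxBl -scalemxAl; case: b => [[|b] lt_bk].
  rewrite expr0 mul1mx [x *m _ *m c]mx11_scalar xZc scalemx1.
  by rewrite -mx11_scalar subrr.
rewrite exprS -mulmxE !mulmxA gZ -[x *m _ *m Z]mulmxA mulmxE -exprSr Zk.
by rewrite mulmx0 !mul0mx scaler0 subrr.
Qed.
End Krylov.

Lemma krylov_complement (F : fieldType) k m' (Z : 'M[F]_(k.+1 + m'))
    (x : 'rV_(k.+1 + m')) (c : 'cV_(k.+1 + m')) :
  Z ^+ k.+1 = 0 -> (x *m Z ^+ k *m c) 0 0 = 1 ->
  exists (B : 'M_(m', k.+1 + m')) (Z' : 'M_m'),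
    [/\ (B :=: kermx (krylov_cols k.+1 Z c))%MS, row_free B,
        B *m Z = Z' *m B & Z' ^+ k.+1 = 0].
Proof.
move=> Zk xZc; set K := krylov_cols k.+1 Z c.
have rkK : \rank (kermx K) = m' by rewrite mxrank_ker (rank_krylov_cols Zk xZc) addKn.
pose B : 'M_(m', k.+1 + m') := castmx (rkK, erefl) (row_base (kermx K)).
have defB : (B :=: kermx K)%MS := eqmx_trans (eqmx_cast _ _) (eq_row_base _).
have B_free : row_free B by rewrite /row_free defB rkK.
have /submxP[Z' BZ] : (B *m Z <= B)%MS.
  by rewrite defB (submx_trans _ (krylov_kermx_stable c Zk)) ?submxMr ?defB.
exists B, Z'; split=> //; apply: (row_free_inj B_free); rewrite /= mul0mx.
have BZj j : B *m Z ^+ j = Z' ^+ j *m B.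
  elim: j => [|j IHj]; first by rewrite !expr0 mulmx1 mul1mx.
  by rewrite !exprSr -!mulmxE mulmxA IHj -!mulmxA BZ.
by rewrite -BZj Zk mulmx0.
Qed.

Section NilpotentNormalForm.
Variables (F : fieldType) (S : {pred F}).
Hypotheses (S0 : 0 \in S) (S1 : 1 \in S).

Lemma block_mxOver p q (A : 'M[F]_p) (B : 'M_(p, q)) (C : 'M_(q, p)) (D : 'M_q) :
  A \is a mxOver S -> B \is a mxOver S -> C \is a mxOver S -> D \is a mxOver S ->
  block_mx A B C D \is a mxOver S.
Proof.
move=> /mxOverP AS /mxOverP BS /mxOverP CS /mxOverP DS; apply/mxOverP => i j.
rewrite -(splitK i) -(splitK j).
by case: (split i) => a; case: (split j) => b;
  rewrite ?block_mxEul ?block_mxEur ?block_mxEdl ?block_mxEdr.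
Qed.

Lemma row_mxOver p q (A : 'rV[F]_p) (B : 'rV_q) :
  A \is a mxOver S -> B \is a mxOver S -> row_mx A B \is a mxOver S.
Proof.
move=> /mxOverP AS /mxOverP BS; apply/mxOverP => i j; rewrite -(splitK j).
by case: (split j) => b; rewrite ?row_mxEl ?row_mxEr.
Qed.

Lemma shift_mxOver k : shift_mx F k \is a mxOver S.
Proof. by apply/mxOverP => i j; rewrite mxE; case: eqP. Qed.

Lemma delta_mxOver p q i j : delta_mx i j \is a @mxOver p q F S.
Proof. by apply/mxOverP => i' j'; rewrite mxE; case: (_ && _). Qed.

(* Rescaling [X] by [a' != 0] makes the coefficient of its last row 0 or 1. *)
Lemma row_scale_mxOver_comb k m (X : 'M[F]_(k.+1, m)) a :
  exists a' (d : 'rV_k.+1),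
    [/\ a' != 0, d \is a mxOver S & d *m (a' *: X) = a *: row ord_max X].
Proof.
have [a0|a_neq0] := eqVneq a 0.
  by exists 1, 0; rewrite oner_neq0 mxOver0 // mul0mx a0 scale0r.
by exists a, (delta_mx 0 ord_max); rewrite delta_mxOver // -scalemxAr -rowE.
Qed.

Lemma nilpotent_normal_form m (Z : 'M[F]_m) (g : 'rV_m) p :
  Z ^+ p = 0 -> g *m Z = 0 ->
  exists T J cc, [/\ T \in unitmx, T *m Z = J *m T, g = cc *m T,
                   J \is a mxOver S & cc \is a mxOver S].
Proof.
elim/ltn_ind: m Z g p => m IHm Z g p Zp gZ.
have [m0|m_gt0] := posnP m.
  subst m; exists 1%:M, 0, 0; rewrite unitmx1 flatmxOver thinmxOver.
  by split; rewrite // ?[LHS]flatmx0 ?[RHS]flatmx0 ?[LHS]thinmx0 ?[RHS]thinmx0.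
have [k [Zk Zk_neq0]] := nilpotent_index m_gt0 Zp.
have [x [c xZc]] := mx_neq0_dual_pair Zk_neq0.
have [m' def_m] : exists m', m = (k.+1 + m')%N.
  by exists (m - k.+1)%N; rewrite subnKC // (krylov_order Zk xZc).
subst m; set X := krylov_rows k.+1 Z x.
have [B [Z' [defB B_free BZ Z'k]]] := krylov_complement Zk xZc.
pose a := (g *m c) 0 0.
have /submxP[gam gamB] : (g - a *: (x *m Z ^+ k) <= B)%MS.
  by rewrite defB krylov_ker_decomp.
have gamZ' : gam *m Z' = 0.
  apply: (row_free_inj B_free); rewrite /= mul0mx -mulmxA -BZ mulmxA -gamB.
  rewrite mulmxBl gZ -scalemxAl -mulmxA mulmxE -exprSr Zk mulmx0 scaler0.
  by rewrite subr0.
have [|T' [J' [cc' [T'_unit T'Z' gamT' J'S cc'S]]]] := IHm m' _ Z' gam _ Z'k gamZ'.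
  by rewrite addSn ltnS leq_addl.
have [a' [d [a'_neq0 dS dX]]] := row_scale_mxOver_comb X a.
rewrite rowK in dX.
exists (col_mx (a' *: X) (T' *m B)), (block_mx (shift_mx F k.+1) 0 0 J').
exists (row_mx d cc'); split.
- rewrite -row_full_unit -sub1mx -addsmxE.
  rewrite (adds_eqmx (eqmx_scale _ a'_neq0) (eqmx_trans (eqmxMfull _ _) defB)).
    exact: krylov_rows_kermx_full.
  by rewrite row_full_unit.
- rewrite mul_col_mx mul_block_col !mul0mx addr0 add0r -scalemxAl.
  by rewrite krylov_rows_shift // scalemxAr -mulmxA BZ !mulmxA T'Z'.
- by rewrite mul_row_col dX mulmxA -gamT' -gamB addrC subrK.
- by rewrite block_mxOver ?shift_mxOver ?mxOver0.
- exact: row_mxOver.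
Qed.

End NilpotentNormalForm.

Definition cayley (F : fieldType) m (X : 'M[F]_m) := (1%:M + X) *m invmx (1%:M - X).

Section Cayley.
Variables (F : fieldType) (m : nat).
Implicit Types P X Y : 'M[F]_m.

Lemma cayley_similar P X Y :
  1%:M - X \in unitmx -> 1%:M - Y \in unitmx -> P *m X = Y *m P ->
  P *m cayley X = cayley Y *m P.
Proof.
move=> uX uY PX.
have PB : P *m (1%:M - X) = (1%:M - Y) *m P.
  by rewrite mulmxBr mulmxBl mulmx1 mul1mx PX.
have PV : P *m invmx (1%:M - X) = invmx (1%:M - Y) *m P.
  by apply: (canRL (mulKmx uY)); rewrite mulmxA -PB mulmxK.
have PD : P *m (1%:M + X) = (1%:M + Y) *m P.
  by rewrite mulmxDr mulmxDl mulmx1 mul1mx PX.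
by rewrite /cayley mulmxA PD -mulmxA PV mulmxA.
Qed.

Lemma invmx_cayley X :
  1%:M + X \in unitmx -> 1%:M - X \in unitmx -> invmx (cayley X) = cayley (- X).
Proof.
move=> uXp uXm.
have CNC : cayley (- X) *m cayley X = 1%:M.
  by rewrite /cayley opprK -!mulmxA (mulKmx uXp) mulmxV.
have [_ uC] := mulmx1_unit CNC.
by rewrite -[LHS]mul1mx -CNC -mulmxA mulmxV // mulmx1.
Qed.

Lemma map_cayley (F' : fieldType) (f : {rmorphism F -> F'}) X :
  map_mx f (cayley X) = cayley (map_mx f X).
Proof. by rewrite map_mxM map_invmx map_mxD map_mxB map_mx1. Qed.

End Cayley.

Definition icayley (F : fieldType) m (G : 'M[F]_m) := (G - 1%:M) *m invmx (G + 1%:M).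

Lemma icayley_fix (F : fieldType) m (G : 'M[F]_m) (e : 'rV_m) :
  e *m G = e -> e *m icayley G = 0.
Proof. by move=> eG; rewrite mulmxA mulmxBr eG mulmx1 subrr mul0mx. Qed.

Section UnipotentCayley.
Variables (F : numFieldType) (m p : nat) (G : 'M[F]_m).
Hypothesis Gp : (G - 1%:M) ^+ p = 0.

Let add1_sub_sub1 : (G + 1%:M) - (G - 1%:M) = 2%:M.
Proof. by rewrite opprB addrCA [G + _]addrC addrK -raddfD /= -mulr2n. Qed.

Lemma unipotent_add1_unit : G + 1%:M \in unitmx.
Proof.
rewrite -(subrK (G - 1%:M) (G + 1%:M)) add1_sub_sub1.
by apply: nilpotent_scalar_add_unit Gp _; rewrite pnatr_eq0.
Qed.

Lemma icayley_nilpotent : icayley G ^+ p = 0.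
Proof.
have GD : comm_mx (G - 1%:M) (G + 1%:M).
  exact: comm_mxD (comm_mx_sym (comm_mxB (comm_mx_refl G) (comm_mx1 G))) (comm_mx1 _).
have GV : (G - 1%:M) *m invmx (G + 1%:M) = invmx (G + 1%:M) *m (G - 1%:M).
  by apply: (canRL (mulKmx unipotent_add1_unit)); rewrite mulmxA -GD mulmxK ?unipotent_add1_unit.
by rewrite /icayley mulmxE exprMn_comm ?Gp ?mul0r; last exact: GV.
Qed.

Lemma icayleyK : cayley (icayley G) = G.
Proof.
set D := G + 1%:M; have uD : D \in unitmx := unipotent_add1_unit.
have add1_add_sub1 : D + (G - 1%:M) = 2%:M *m G.
  by rewrite mul_scalar_mx scaler_nat mulr2n addrACA subrr addr0.
have sub_icayley : 1%:M - icayley G = 2%:M *m invmx D.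
  by rewrite -{1}(mulmxV uD) -mulmxBl add1_sub_sub1.
have add_icayley : 1%:M + icayley G = 2%:M *m G *m invmx D.
  by rewrite -{1}(mulmxV uD) -mulmxDl add1_add_sub1.
have GX : G *m (1%:M - icayley G) = 1%:M + icayley G.
  by rewrite sub_icayley add_icayley mulmxA scalar_mxC.
by rewrite /cayley -GX mulmxK // (nilpotent_sub1_unit icayley_nilpotent).
Qed.
End UnipotentCayley.

Lemma eigenvalue0_nilpotent (F : closedFieldType) n (N : 'M[F]_n) :
  (forall a, eigenvalue N a -> a = 0) -> exists q, N ^+ q = 0.
Proof.
case: n N => [|n] N N_eig; first by exists 0%N; rewrite [LHS]flatmx0.
have [r def_chi] := closed_field_poly_normal (char_poly N).
rewrite (monicP (char_poly_monic N)) scale1r in def_chi.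
have r0 z : z \in r -> z = 0.
  by move=> zr; apply: N_eig; rewrite eigenvalue_root_char def_chi root_prod_XsubC.
have chiN : char_poly N = 'X ^+ size r.
  rewrite def_chi; elim: r r0 {def_chi} => [|z r IHr] r0; first by rewrite big_nil.
  rewrite big_cons IHr => [|y yr]; last by apply: r0; rewrite in_cons yr orbT.
  by rewrite (r0 z (mem_head _ _)) subr0 -exprS.
by exists (size r); have := Cayley_Hamilton N; rewrite chiN rmorphXn /= horner_mx_X.
Qed.

Lemma unipotent_sub1_nilpotent (R : realType) n (U : 'M[R[i]]_n) :
  unipotent U -> exists q, (U - 1%:M) ^+ q = 0.
Proof.
move=> U_unip; apply: eigenvalue0_nilpotent => a.
rewrite /eigenvalue /eigenspace -addrA -opprD -raddfD /= => /U_unip.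
by move/(canRL (addKr 1)); rewrite addNr.
Qed.

Section ConjugateMatrix.
Variable R : rcfType.

Lemma map_mx_conjK p q (A : 'M[R[i]]_(p, q)) : mx_conj (mx_conj A) = A.
Proof. by apply/matrixP => i j; rewrite !mxE conjcK. Qed.

Lemma map_mx_conj_real p q (A : 'M[R[i]]_(p, q)) :
  A \is a mxOver [pred z | conjc z == z] -> mx_conj A = A.
Proof. by move=> /mxOverP A_real; apply/matrixP => i j; rewrite mxE (eqP (A_real i j)). Qed.

Definition conj_quot m (T : 'M[R[i]]_m) := invmx (mx_conj T) *m T.

Lemma conj_quot_coninvolution m (T : 'M[R[i]]_m) :
  T \in unitmx -> conj_quot T *m mx_conj (conj_quot T) = 1%:M.
Proof.
move=> T_unit; rewrite /conj_quot map_mxM map_invmx map_mx_conjK.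
by rewrite !mulmxA mulmxK // mulVmx // map_unitmx.
Qed.

Lemma conj_quot_similar m (T J Y : 'M[R[i]]_m) :
  T \in unitmx -> mx_conj J = J -> T *m Y = J *m T ->
  conj_quot T *m Y = mx_conj Y *m conj_quot T.
Proof.
move=> T_unit J_real TY.
have defY : Y = invmx T *m J *m T by rewrite -mulmxA -TY mulKmx.
rewrite /conj_quot {2}defY !map_mxM map_invmx J_real -mulmxA TY !mulmxA.
by rewrite mulmxK ?map_unitmx.
Qed.

End ConjugateMatrix.

(* [i X] is similar to a matrix with entries 0 and 1, hence to its conjugate [- i conj X]. *)
Lemma nilpotent_conj_antisimilar (R : rcfType) m (X : 'M[R[i]]_m) (e : 'rV_m) p :
  X ^+ p = 0 -> e *m X = 0 -> mx_conj e = e ->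
  exists H, [/\ H *m mx_conj H = 1%:M, H *m X = - mx_conj X *m H & e *m H = e].
Proof.
move=> Xp eX e_real.
have eiX : e *m ('i *: X) = 0 by rewrite -scalemxAr eX scaler0.
have [||T [J [cc [T_unit TX eT JS ccS]]]] :=
  nilpotent_normal_form (S := [pred z | conjc z == z]) _ _ (nilpotent_scale 'i Xp) eiX.
- by rewrite inE conjc0.
- by rewrite inE conjc1.
exists (conj_quot T); split; first exact: conj_quot_coninvolution.
  have := conj_quot_similar T_unit (map_mx_conj_real JS) TX.
  have conj_i : (conjc : {rmorphism R[i] -> R[i]}) 'i = - 'i.
    by apply/eqP; rewrite eq_complex /= oppr0 !eqxx.
  rewrite map_mxZ conj_i -!scalemxAl -scalemxAr mulNmx.
  by rewrite scaleNr -scalerN => /scalerI; apply; rewrite neq0Ci.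
have e_cT : e = cc *m mx_conj T by rewrite -{1}e_real eT map_mxM map_mx_conj_real.
by rewrite /conj_quot mulmxA {1}e_cT mulmxK ?map_unitmx // -eT.
Qed.

Lemma unipotent_c_reversing (R : rcfType) m (G : 'M[R[i]]_m) (e : 'rV_m) p :
  (G - 1%:M) ^+ p = 0 -> e *m G = e -> mx_conj e = e ->
  exists H, [/\ H *m mx_conj H = 1%:M, H *m G = invmx (mx_conj G) *m H & e *m H = e].
Proof.
move=> Gp eG e_real; set X := icayley G.
have Xp : X ^+ p = 0 := icayley_nilpotent Gp.
have [H [HH HX eH]] := nilpotent_conj_antisimilar Xp (icayley_fix eG) e_real.
have cjG : mx_conj G = cayley (mx_conj X).
  exact: etrans (congr1 _ (esym (icayleyK Gp))) (map_cayley _ X).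
have ucXp : 1%:M + mx_conj X \in unitmx.
  by rewrite -(map_unitmx conjc) map_mxD map_mx1 map_mx_conjK (nilpotent_add1_unit Xp).
have ucXm : 1%:M - mx_conj X \in unitmx.
  by rewrite -(map_unitmx conjc) map_mxB map_mx1 map_mx_conjK (nilpotent_sub1_unit Xp).
exists H; split=> //; rewrite cjG (invmx_cayley ucXp ucXm) -{1}(icayleyK Gp).
by apply: (cayley_similar (nilpotent_sub1_unit Xp) _ HX); rewrite opprK.
Qed.

Section AffineMatrix.
Variables (R : realType) (n : nat).
Implicit Types g h : aff R n.

Definition aff_mx g : 'M[R[i]]_(1 + n) := block_mx 1%:M 0 g.2 g.1.

Definition aff_row : 'rV[R[i]]_(1 + n) := row_mx 1%:M 0.

Lemma aff_mxM g h : aff_mx (aff_mul g h) = aff_mx g *m aff_mx h.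
Proof.
by rewrite /aff_mx mulmx_block !mulmx0 !mul0mx !mulmx1 !addr0 add0r addrC.
Qed.

Lemma aff_mx_bar g : aff_mx (aff_bar g) = mx_conj (aff_mx g).
Proof. by rewrite /aff_mx map_block_mx map_mx1 map_mx0. Qed.

Lemma aff_mx1 : aff_mx (aff_one R n) = 1%:M.
Proof. by rewrite /aff_mx [RHS](scalar_mx_block 1 n). Qed.

Lemma aff_mx_unit g : (aff_mx g \in unitmx) = (g.1 \in unitmx).
Proof. by rewrite !unitmxE /aff_mx det_lblock det1 mul1r. Qed.

Lemma aff_mxV g : g.1 \in unitmx -> aff_mx (aff_inv g) = invmx (aff_mx g).
Proof.
move=> g_unit; have g_mx_unit : aff_mx g \in unitmx by rewrite aff_mx_unit.
have ggV : aff_mul g (aff_inv g) = aff_one R n.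
  by rewrite /aff_mul /= mulmxV // mulmxN mulKVmx // addNr.
by rewrite -[RHS]mulmx1 -aff_mx1 -ggV aff_mxM mulKmx.
Qed.

Lemma aff_mx_inj : injective aff_mx.
Proof.
move=> [A v] [B w] /= eq_AB.
have := congr1 drsubmx eq_AB; have := congr1 dlsubmx eq_AB.
by rewrite /aff_mx !block_mxKdr !block_mxKdl /= => -> ->.
Qed.

Lemma aff_row_mx g : aff_row *m aff_mx g = aff_row.
Proof. by rewrite /aff_row mul_row_block !mulmx0 !mul0mx mul1mx !addr0. Qed.

Lemma aff_row_real : mx_conj aff_row = aff_row.
Proof. by rewrite /aff_row map_row_mx map_mx1 map_mx0. Qed.

Lemma aff_mxP (H : 'M[R[i]]_(1 + n)) :
  aff_row *m H = aff_row -> H = aff_mx (drsubmx H, dlsubmx H).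
Proof.
rewrite -{1}(submxK H) /aff_row mul_row_block !mul0mx !addr0 !mul1mx.
by case/eq_row_mx => ul ur; rewrite /aff_mx /= -{1}(submxK H) ul ur.
Qed.

Lemma aff_mx_sub1_nilpotent g q :
  (g.1 - 1%:M) ^+ q = 0 -> (aff_mx g - 1%:M) ^+ q.+1 = 0.
Proof.
move=> gq; have defN : aff_mx g - 1%:M = block_mx 0 0 g.2 (g.1 - 1%:M).
  by rewrite /aff_mx (scalar_mx_block 1 n 1) opp_block_mx add_block_mx !subrr subr0.
suff Nj j : (aff_mx g - 1%:M) ^+ j.+1 =
            block_mx 0 0 ((g.1 - 1%:M) ^+ j *m g.2) ((g.1 - 1%:M) ^+ j.+1).
  by rewrite Nj exprSr gq mul0r mul0mx block_mx0.
elim: j => [|j IHj]; first by rewrite expr1 expr0 mul1mx defN.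
rewrite exprSr IHj defN -mulmxE mulmx_block !mulmx0 !mul0mx !addr0.
by rewrite mulmxE -exprSr !add0r.
Qed.

Lemma coninvolution_aff_mx h :
  coninvolution h <-> aff_mx h *m mx_conj (aff_mx h) = 1%:M.
Proof.
split=> [[_ hh] | hh]; first by rewrite -aff_mx_bar -aff_mxM hh aff_mx1.
have [h_unit _] := mulmx1_unit hh; split; first by rewrite /in_Aff -aff_mx_unit.
by apply: aff_mx_inj; rewrite aff_mxM aff_mx_bar hh aff_mx1.
Qed.

Section Reversing.
Variables g h : aff R n.
Hypotheses (g_unit : g.1 \in unitmx) (h_coninv : coninvolution h).
Hypothesis hg : aff_mx h *m aff_mx g = invmx (mx_conj (aff_mx g)) *m aff_mx h.

Lemma strongly_c_reversible_aff_mx : strongly_c_reversible g.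
Proof.
have [h_unit _] := h_coninv; have gbar_unit : (aff_bar g).1 \in unitmx by rewrite map_unitmx.
exists h; split=> //; apply: aff_mx_inj.
rewrite !aff_mxM (aff_mxV h_unit) (aff_mxV gbar_unit) aff_mx_bar hg mulmxK //.
by rewrite aff_mx_unit.
Qed.

Lemma c_reversible_coninvolution_factors :
  exists h1 h2, coninvolution h1 /\ coninvolution h2 /\ g = aff_mul h1 h2.
Proof.
move/coninvolution_aff_mx: h_coninv => hh; have [H_unit _] := mulmx1_unit hh.
have cjH : mx_conj (aff_mx h) = invmx (aff_mx h).
  by rewrite -[LHS]mul1mx -(mulVmx H_unit) -mulmxA hh mulmx1.
have cjG_unit : mx_conj (aff_mx g) \in unitmx by rewrite map_unitmx aff_mx_unit.
exists (aff_bar h), (aff_mul h g); split; [|split].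
- by apply/coninvolution_aff_mx; rewrite aff_mx_bar map_mx_conjK; apply: mulmx1C.
- apply/coninvolution_aff_mx; rewrite aff_mxM map_mxM cjH !mulmxA hg mulmxK //.
  exact: mulVmx.
- by apply: aff_mx_inj; rewrite !aff_mxM aff_mx_bar mulmxA (mulmx1C hh) mul1mx.
Qed.

End Reversing.

End AffineMatrix.

Unset Implicit Arguments.

Theorem proposition3p6 (R : realType) (n : nat) (U : 'M[R[i]]_n) (v : 'cV[R[i]]_n) :
  U \in unitmx -> unipotent U ->
  strongly_c_reversible (U, v) /\
  (exists h1 h2 : aff R n, coninvolution h1 /\ coninvolution h2 /\
     (U, v) = aff_mul h1 h2).
Proof.
move=> U_unit /unipotent_sub1_nilpotent[q Uq].
have [H [HH HG affH]] := unipotent_c_reversing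
  (aff_mx_sub1_nilpotent (g := (U, v)) Uq) (aff_row_mx _) (aff_row_real R n).
move: HH HG; rewrite (aff_mxP affH); set h := (_, _) => hh hg.
have h_coninv : coninvolution h by apply/coninvolution_aff_mx.
split; first exact: (strongly_c_reversible_aff_mx (g := (U, v)) U_unit h_coninv hg).
exact: (c_reversible_coninvolution_factors (g := (U, v)) U_unit h_coninv hg).
Qed.
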